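(* Let $H$ be a Hopf algebra over a field $\mathbb{k}$ containing a subalgebra $P$ which is either a polynomial algebra $\mathbb{k}[x]$ or a Laurent polynomial algebra $\mathbb{k}[x^{\pm1}]$, such that $H$ is finitely generated as a right $P$-module. Let $N$ be a positive integer and $q_1(x),\dots,q_N(x)\in P$ pairwise coprime. Then $\bigcap_{\alpha=1}^N(q_\alpha(x))=\big(\prod_{\alpha=1}^Nq_\alpha(x)\big)$ as left ideals of $H$.
   Context: For $h\in H$, $(h)=Hh$ denotes the principal left ideal of $H$ generated by $h$. *)

From HB Require Import structures.
From mathcomp Require Import all_boot all_order all_algebra.
Set Implicit Arguments. Unset Strict Implicit. Unset Printing Implicit Defensive.
Import Order.TTheory GRing.Theory Num.Theory.
Local Open Scope ring_scope.

Section HopfDefs.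
Variables (k : fieldType) (H : algType k).

Definition bilinear_form (b : H -> H -> k) : Prop :=
  (forall c x x' y, b (c *: x + x') y = c * b x y + b x' y) /\
  (forall c x y y', b x (c *: y + y') = c * b x y + b x y').

Definition trilinear_form (t : H -> H -> H -> k) : Prop :=
  (forall c x x' y z, t (c *: x + x') y z = c * t x y z + t x' y z) /\
  (forall c x y y' z, t x (c *: y + y') z = c * t x y z + t x y' z) /\
  (forall c x y z z', t x y (c *: z + z') = c * t x y z + t x y z').

(* An element sum_i a_i (x) b_i of H (x)_k H is represented by the list of
   pairs (a_i, b_i); two representatives denote the same tensor iff every
   bilinear form takes the same value on them ((H (x) H)^* = Bil(H,H;k)). *)
Definition tensor_eq (s t : seq (H * H)) : Prop :=
  forall b, bilinear_form b ->
    \sum_(p <- s) b p.1 p.2 = \sum_(p <- t) b p.1 p.2.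

Definition tensor3_eq (s t : seq (H * H * H)) : Prop :=
  forall tr, trilinear_form tr ->
    \sum_(p <- s) tr p.1.1 p.1.2 p.2 = \sum_(p <- t) tr p.1.1 p.1.2 p.2.

Record is_hopf (D : H -> seq (H * H)) (e : H -> k) (S : H -> H) : Prop := {
  hopf_D_lin : forall c a b,
    tensor_eq (D (c *: a + b)) ([seq (c *: p.1, p.2) | p <- D a] ++ D b);
  hopf_D_mul : forall a b,
    tensor_eq (D (a * b)) [seq (p.1 * r.1, p.2 * r.2) | p <- D a, r <- D b];
  hopf_D_one : tensor_eq (D 1) [:: (1, 1)];
  hopf_coassoc : forall h,
    tensor3_eq [seq (r.1, r.2, p.2) | p <- D h, r <- D p.1]
               [seq (p.1, r.1, r.2) | p <- D h, r <- D p.2];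
  hopf_e_lin : forall c a b, e (c *: a + b) = c * e a + e b;
  hopf_e_mul : forall a b, e (a * b) = e a * e b;
  hopf_e_one : e 1 = 1;
  hopf_counit_l : forall h, \sum_(p <- D h) e p.1 *: p.2 = h;
  hopf_counit_r : forall h, \sum_(p <- D h) e p.2 *: p.1 = h;
  hopf_S_lin : forall c a b, S (c *: a + b) = c *: S a + S b;
  hopf_antipode_l : forall h, \sum_(p <- D h) S p.1 * p.2 = e h *: 1;
  hopf_antipode_r : forall h, \sum_(p <- D h) p.1 * S p.2 = e h *: 1
}.

Definition peval (p : {poly k}) (x : H) : H := (map_poly (in_alg H) p).[x].

Definition is_poly_subalg (P : H -> Prop) (x : H) : Prop :=
  (forall h, P h <-> exists p : {poly k}, h = peval p x) /\
  (forall p : {poly k}, peval p x = 0 -> p = 0).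

Definition is_laurent_subalg (P : H -> Prop) (x : H) : Prop :=
  exists xi : H, x * xi = 1 /\ xi * x = 1 /\
  (forall h, P h <-> exists (p : {poly k}) (n : nat), h = peval p x * xi ^+ n) /\
  (forall p : {poly k}, peval p x = 0 -> p = 0).

Definition fg_right_module (P : H -> Prop) : Prop :=
  exists gs : seq H, forall h, exists ps : seq H,
    (forall i, P ps`_i) /\ h = \sum_(i < size gs) gs`_i * ps`_i.

Definition coprime_in (P : H -> Prop) (a b : H) : Prop :=
  forall d, P d ->
    (exists r, P r /\ a = d * r) -> (exists r, P r /\ b = d * r) ->
    exists u, P u /\ d * u = 1 /\ u * d = 1.

End HopfDefs.

Definition lideal (H : ringType) (h : H) : H -> Prop := fun y => exists a, y = a * h.

From HB Require Import structures.
From mathcomp Require Import all_boot all_order all_algebra.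
Import Order.TTheory GRing.Theory Num.Theory.
Set Implicit Arguments.
Unset Strict Implicit.
Unset Printing Implicit Defensive.
Local Open Scope ring_scope.

(* In both cases P is a commutative ring in which coprime elements are
   comaximal: P is a localization of k[x], and a polynomial Bezout identity
   for the gcd of two representatives, divided by the unit that the gcd must
   be in P, gives u a + v b = 1 in P.  Then y = t a = s b implies
   y = y (u a + v b) = (s u + t v) a b, using only that P is commutative, and
   induction on the number of factors finishes since comaximality with a
   fixed element is stable under products. *)

Record comm_semiring_closed (R : pzRingType) (P : R -> Prop) : Prop := {
  closed0 : P 0;
  closed1 : P 1;
  closedD : forall a b, P a -> P b -> P (a + b);
  closedM : forall a b, P a -> P b -> P (a * b);
  closed_comm : forall a b, P a -> P b -> GRing.comm a b
}.

Definition comaximal (R : pzRingType) (P : R -> Prop) (a b : R) : Prop :=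
  exists u v, [/\ P u, P v & u * a + v * b = 1].

Section Comaximal.
Variables (R : nzRingType) (P : R -> Prop).
Hypothesis PR : comm_semiring_closed P.

Lemma closed_prod (I : Type) (r : seq I) (C : pred I) (F : I -> R) :
  (forall i, P (F i)) -> P (\prod_(i <- r | C i) F i).
Proof.
by move=> PF; apply: big_ind => //; [exact: (closed1 PR) | exact: (closedM PR)].
Qed.

Lemma comaximalMr a b c :
  P a -> comaximal P c a -> comaximal P c b -> comaximal P c (a * b).
Proof.
move=> Pa [u1 [v1 [Pu1 Pv1 E1]]] [u2 [v2 [Pu2 Pv2 E2]]].
exists (u1 + v1 * a * u2), (v1 * v2); split.
- by apply: (closedD PR) => //; apply: (closedM PR) => //; apply: (closedM PR).
- exact: (closedM PR).
rewrite -E1 -{2}(mulr1 (v1 * a)) -E2 mulrDr mulrDl addrA !mulrA.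
by rewrite -(mulrA v1 a v2) (closed_comm PR Pa Pv2) !mulrA.
Qed.

Lemma comaximal_prodr (I : eqType) (r : seq I) (F : I -> R) c :
  (forall i, P (F i)) -> {in r, forall i, comaximal P c (F i)} ->
  comaximal P c (\prod_(i <- r) F i).
Proof.
move=> PF; elim: r => [_ | i r IHr cr].
  exists 0, 1; split; [exact: (closed0 PR) | exact: (closed1 PR) |].
  by rewrite big_nil mul0r add0r mulr1.
rewrite big_cons; apply: comaximalMr => //; first by apply: cr; exact: mem_head.
by apply: IHr => j rj; apply: cr; rewrite inE rj orbT.
Qed.

Lemma lidealM_comaximal a b y :
  P a -> P b -> comaximal P a b -> lideal a y -> lideal b y -> lideal (a * b) y.
Proof.
move=> Pa Pb [u [v [Pu Pv E]]] [t yt] [s ys].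
exists (s * u + t * v); rewrite -[y]mulr1 -E mulrDr mulrDl.
have -> : y * (u * a) = s * u * (a * b).
  by rewrite ys -mulrA (closed_comm PR Pb (closedM PR Pu Pa)) !mulrA.
have -> // : y * (v * b) = t * v * (a * b).
by rewrite yt !mulrA -(mulrA t a v) (closed_comm PR Pa Pv) !mulrA.
Qed.

Lemma lideal_prod_mem (I : eqType) (r : seq I) (F : I -> R) i :
  (forall j, P (F j)) -> i \in r -> lideal (F i) (\prod_(j <- r) F j).
Proof.
move=> PF; elim: r => [|j r IHr] //; rewrite big_cons inE.
have [<- _ | _ /= ri] := eqVneq i j.
  by exists (\prod_(j <- r) F j); apply: (closed_comm PR (PF i)); exact: closed_prod.
by have [c ->] := IHr ri; exists (F j * c); rewrite mulrA.
Qed.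

Lemma lideal_prod_comaximal (I : finType) (F : I -> R) :
  (forall i, P (F i)) -> (forall i j, i != j -> comaximal P (F i) (F j)) ->
  forall y, (forall i, lideal (F i) y) <-> lideal (\prod_i F i) y.
Proof.
move=> PF coF y; split => [Fy | [a ->] i].
  have prod_uniq (s : seq I) : uniq s -> lideal (\prod_(i <- s) F i) y.
    elim: s => [_ | i s IHs /= /andP[si us]].
      by exists y; rewrite big_nil mulr1.
    rewrite big_cons; apply: lidealM_comaximal => //.
    - exact: closed_prod.
    - apply: comaximal_prodr => // j sj; apply: coF.
      by apply: contraNneq si => ->.
    - exact: IHs.
  exact/prod_uniq/index_enum_uniq.
have [c ->] := lideal_prod_mem PF (mem_index_enum i).
by exists (a * c); rewrite mulrA.
Qed.

End Comaximal.

Section PolynomialEvaluation.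
Variables (k : fieldType) (R : algType k) (x : R).
Implicit Types p r : {poly k}.

Lemma pevalE p : peval p x = horner_alg x p.
Proof. by []. Qed.

Lemma peval1 : peval 1 x = 1.
Proof. by rewrite pevalE rmorph1. Qed.

Lemma pevalX : peval 'X x = x.
Proof. by rewrite pevalE horner_algX. Qed.

Lemma pevalD p r : peval (p + r) x = peval p x + peval r x.
Proof. by rewrite !pevalE rmorphD. Qed.

Lemma pevalM p r : peval (p * r) x = peval p x * peval r x.
Proof. by rewrite !pevalE rmorphM. Qed.

Lemma pevalXn p n : peval (p ^+ n) x = peval p x ^+ n.
Proof. by rewrite !pevalE rmorphXn. Qed.

Lemma comm_peval y p : GRing.comm y x -> GRing.comm y (peval p x).
Proof.
by move=> yx; apply: commr_horner => // i; rewrite coef_map /= comm_alg.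
Qed.

Lemma peval_comm p r : GRing.comm (peval p x) (peval r x).
Proof. by rewrite /GRing.comm -!pevalM mulrC. Qed.

End PolynomialEvaluation.

(* P = k[x][z] with z the inverse of w(x), i.e. the localization of k[x] at
   the powers of w(x): w = 1 gives k[x], and w = 'X gives k[x, x^-1]. *)
Definition is_localized_subalg (k : fieldType) (R : algType k) (P : R -> Prop)
    (x z : R) (w : {poly k}) : Prop :=
  [/\ GRing.comm z x, peval w x * z = 1
    & forall h, P h <-> exists p n, h = peval p x * z ^+ n].

Section Localization.
Variables (k : fieldType) (R : algType k) (P : R -> Prop) (x z : R).
Variable w : {poly k}.
Hypothesis Ploc : is_localized_subalg P x z w.

Let zx : GRing.comm z x. Proof. by case: Ploc. Qed.
Let wz : peval w x * z = 1. Proof. by case: Ploc. Qed.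
Let P_def : forall h, P h <-> exists p n, h = peval p x * z ^+ n.
Proof. by case: Ploc. Qed.

Lemma comm_zXn_peval n p : GRing.comm (z ^+ n) (peval p x).
Proof. by apply/comm_peval/commr_sym/commrX/commr_sym. Qed.

Lemma wzXn n : peval w x ^+ n * z ^+ n = 1.
Proof. by rewrite -exprMn_comm ?wz ?expr1n //; apply/commr_sym/comm_peval. Qed.

Lemma localM p n r m :
  peval p x * z ^+ n * (peval r x * z ^+ m) = peval (p * r) x * z ^+ (n + m).
Proof.
by rewrite -mulrA (mulrA (z ^+ n)) comm_zXn_peval pevalM exprD !mulrA.
Qed.

Lemma local_expand p m n :
  peval (p * w ^+ m) x * z ^+ (m + n) = peval p x * z ^+ n.
Proof.
by rewrite pevalM pevalXn exprD -mulrA (mulrA (peval w x ^+ m)) wzXn mul1r.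
Qed.

Lemma local_cancel p n : peval (w ^+ n) x * (peval p x * z ^+ n) = peval p x.
Proof. by rewrite mulrA peval_comm -mulrA pevalXn wzXn mulr1. Qed.

Lemma local_closed : comm_semiring_closed P.
Proof.
have Ppeval p n : P (peval p x * z ^+ n) by apply/P_def; exists p, n.
split.
- by apply/P_def; exists 0, 0%N; rewrite pevalE rmorph0 mul0r.
- by apply/P_def; exists 1, 0%N; rewrite peval1 mulr1.
- move=> _ _ /P_def[p [n ->]] /P_def[r [m ->]].
  rewrite -(local_expand p m n) -(local_expand r n m) addnC -mulrDl -pevalD.
  exact: Ppeval.
- by move=> _ _ /P_def[p [n ->]] /P_def[r [m ->]]; rewrite localM.
move=> _ _ /P_def[p [n ->]] /P_def[r [m ->]].
by rewrite /GRing.comm !localM mulrC addnC.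
Qed.

Lemma coprime_comaximal a b :
  P a -> P b -> coprime_in P a b -> comaximal P a b.
Proof.
move=> /P_def[p1 [n1 ->]] /P_def[p2 [n2 ->]] cop.
have [[c1 c2] /= Eg] := Bezoutp p1 p2; set g := _ + _ in Eg.
have Pc p : P (peval p x) by apply/P_def; exists p, 0%N; rewrite mulr1.
have Pg := Pc g.
have g_dvd p n : g %| p -> exists r, P r /\ peval p x * z ^+ n = peval g x * r.
  move=> gp; exists (peval (p %/ g) x * z ^+ n); split.
    by apply/P_def; exists (p %/ g), n.
  by rewrite mulrA -pevalM mulrC divpK.
have gp1 : g %| p1 by rewrite (eqp_dvdl _ Eg) dvdp_gcdl.
have gp2 : g %| p2 by rewrite (eqp_dvdl _ Eg) dvdp_gcdr.
have [u [Pu [gu _]]] := cop _ Pg (g_dvd _ _ gp1) (g_dvd _ _ gp2).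
exists (u * peval (c1 * w ^+ n1) x), (u * peval (c2 * w ^+ n2) x).
split; try exact: (closedM local_closed Pu (Pc _)).
rewrite -!mulrA !pevalM -!mulrA !local_cancel -!pevalM -mulrDr -pevalD.
by rewrite (closed_comm local_closed Pu Pg).
Qed.

End Localization.

Lemma poly_subalg_localized (k : fieldType) (R : algType k) (P : R -> Prop) x :
  is_poly_subalg P x -> is_localized_subalg P x 1 1.
Proof.
case=> P_def _; split; first exact/commr_sym/commr1.
  by rewrite peval1 mulr1.
move=> h; split => [/P_def[p ->] | [p [n ->]]].
  by exists p, 0%N; rewrite mulr1.
by apply/P_def; exists p; rewrite expr1n mulr1.
Qed.

Lemma laurent_subalg_localized (k : fieldType) (R : algType k) (P : R -> Prop) x :
  is_laurent_subalg P x -> exists xi, is_localized_subalg P x xi 'X.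
Proof.
case=> xi [xxi [xix [P_def _]]]; exists xi; split => //.
- by rewrite /GRing.comm xxi xix.
- by rewrite pevalX.
Qed.

Theorem lemma2p10 (k : fieldType) (H : algType k)
  (D : H -> seq (H * H)) (e : H -> k) (S : H -> H)
  (hopfH : is_hopf D e S)
  (P : H -> Prop)
  (hP : exists x : H, is_poly_subalg P x \/ is_laurent_subalg P x)
  (hfg : fg_right_module P)
  (N : nat) (hN : (0 < N)%N) (q : 'I_N -> H)
  (hqP : forall i, P (q i))
  (hcop : forall i j : 'I_N, i != j -> coprime_in P (q i) (q j)) :
  forall y : H, (forall i, lideal (q i) y) <-> lideal (\prod_(i < N) q i) y.
Proof.
have [x [z [w Ploc]]] : exists x z w, is_localized_subalg P x z w.
  have [x [/poly_subalg_localized | /laurent_subalg_localized [xi]]] := hP.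
    by exists x, 1, 1.
  by exists x, xi, 'X.
apply: (lideal_prod_comaximal (local_closed Ploc) hqP) => i j /hcop.
exact: (coprime_comaximal Ploc (hqP i) (hqP j)).
Qed.
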